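(* Let $r$ be an odd integer. Let $n>1$ be an odd integer with $n\equiv -r\pmod{4}$ and $n\geqslant \max\{r,4-r\}$. Then \[ \sum_{k=0}^{n-1}[8k+r]\frac{(q^r;q^4)_k^4}{(q^4;q^4)_k^4}q^{(4-2r)k} \equiv 0\pmod{\Phi_n(q)^2}. \]
   Context: $q$ is an indeterminate. The $q$-shifted factorial is $(a;q)_k=(1-a)(1-aq)\cdots(1-aq^{k-1})$ (with $(a;q)_0=1$), for any Laurent monomial $a$ in $q$. For any integer $m$ (including negative $m$), $[m]=(1-q^m)/(1-q)$. $\Phi_n(q)$ denotes the $n$-th cyclotomic polynomial. A congruence of rational functions modulo a polynomial $P(q)$, where the denominators are coprime to $P(q)$, means that $P(q)$ divides the numerator of the difference in lowest terms. *)

From HB Require Import structures.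
From mathcomp Require Import all_boot all_order all_algebra all_field.
Set Implicit Arguments. Unset Strict Implicit. Unset Printing Implicit Defensive.
Import Order.TTheory GRing.Theory Num.Theory.
Local Open Scope ring_scope.

Definition Qq : Type := {fraction {poly rat}}.

Definition qq : Qq := tofrac ('X : {poly rat}).

Definition qint (m : int) : Qq := (1 - qq ^ m) / (1 - qq).

Definition qpoch (a b : Qq) (k : nat) : Qq := \prod_(i < k) (1 - a * b ^+ i).

Definition PhiQ (n : nat) : {poly rat} := map_poly intr 'Phi_n.

(* f = g (mod P) for rational functions: f - g = P * A / B with B a nonzero
   polynomial coprime to P, i.e. P divides the numerator of f - g in lowest
   terms. *)
Definition congr_ratfun (f g : Qq) (P : {poly rat}) : Prop :=
  exists A B : {poly rat},
    [/\ B != 0, coprimep B P & f - g = tofrac (P * A) / tofrac B].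

From HB Require Import structures.
From mathcomp Require Import all_boot all_order all_algebra all_field.
From mathcomp Require Import ring zify.
Import Order.TTheory GRing.Theory Num.Theory.
Local Open Scope ring_scope.

Set Implicit Arguments.
Unset Strict Implicit.
Unset Printing Implicit Defensive.

(* Write a = q^r, p = q^4 and t = q^(3n).  The k-th summand equals (1 - a)/(1 - q) times
   W_k U_k(1), where W_k = (1 - a p^(2k))/(1 - a) (a;p)_k^2/(p;p)_k^2 (p/a^2)^k and
   U_k(y) = (ay;p)_k (a/y;p)_k / ((py;p)_k (p/y;p)_k).  Since
   (1 - z)^2 - (1 - zt)(1 - z/t) = (z/t)(1 - t)^2 and Phi_n divides 1 - t, U_k(1) and
   U_k(t) agree modulo Phi_n^2; for k < n all denominators are prime to Phi_n because
   n is odd.  With b = a, c = at and q^(-4N) = a/t, i.e. N = (3n - r)/4, the sum of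
   W_k U_k(t) is a terminating very-well-poised 6phi5 series, and Jackson's summation
   (proved by WZ telescoping in N) evaluates it as
   (ap;p)_N (p/(at);p)_N / ((p;p)_N (p/t;p)_N), whose numerator contains the two
   factors 1 - q^(3n) and 1 - q^(-2n), each divisible by Phi_n. *)

Section QPochhammer.
Variable F : fieldType.
Implicit Types x p : F.

Definition poch x p k := \prod_(i < k) (1 - x * p ^+ i).

Lemma poch0 x p : poch x p 0 = 1.
Proof. by rewrite /poch big_ord0. Qed.

Lemma pochS x p k : poch x p k.+1 = poch x p k * (1 - x * p ^+ k).
Proof. by rewrite /poch big_ord_recr. Qed.

Lemma pochSl x p k : poch x p k.+1 = (1 - x) * poch (x * p) p k.
Proof.
rewrite /poch big_ord_recl expr0 mulr1; congr (_ * _).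
by apply: eq_bigr => i _; rewrite exprS mulrA.
Qed.

Lemma poch_shift x p k : poch x p k * (1 - x * p ^+ k) = (1 - x) * poch (x * p) p k.
Proof. by rewrite -pochS pochSl. Qed.

Lemma poch_eq0 x p k i : (i < k)%N -> x * p ^+ i = 1 -> poch x p k = 0.
Proof. by move=> lt_ik e; rewrite /poch (bigD1 (Ordinal lt_ik)) //= e subrr mul0r. Qed.

Lemma poch_neq0 x p k : (forall i, 1 - x * p ^+ i != 0) -> poch x p k != 0.
Proof. by move=> x_gen; apply/prodf_neq0 => i _. Qed.

End QPochhammer.

Section WellPoised6phi5.
Variables (F : fieldType) (p a b c : F).
Hypotheses (p_neq0 : p != 0) (a_neq0 : a != 0) (b_neq0 : b != 0) (c_neq0 : c != 0).
Hypothesis p_nroot : forall j, p ^+ j.+1 != 1.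
Hypothesis a_gen : forall j, a * p ^+ j != 1.
Hypothesis b_gen : forall j, a * p ^+ j.+1 != b.
Hypothesis c_gen : forall j, a * p ^+ j.+1 != c.

Definition wp_term N k :=
  (1 - a * p ^+ (2 * k)) / (1 - a)
  * (poch a p k * poch b p k * poch c p k * poch (p^-1 ^+ N) p k)
  / (poch p p k * poch (a * p / b) p k * poch (a * p / c) p k
     * poch (a * p ^+ N.+1) p k)
  * (a * p ^+ N.+1 / (b * c)) ^+ k.

Definition wp_sum N :=
  poch (a * p) p N * poch (a * p / (b * c)) p N
  / (poch (a * p / b) p N * poch (a * p / c) p N).

Definition wp_ratio N := let Q := p ^+ N.+1 in
  (1 - a * Q) * (1 - a * Q / (b * c)) / ((1 - a * Q / b) * (1 - a * Q / c)).

(* The WZ certificate of the recurrence [wp_sum N.+1 = wp_ratio N * wp_sum N]. *)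
Definition wp_cert N k := let Q := p ^+ N.+1 in let P := p ^+ k in
  a * Q / (b * c * (1 - a * Q / b) * (1 - a * Q / c) * (1 - a) * (1 - Q^-1))
  * (poch a p k * poch b p k * poch c p k * poch Q^-1 p k
     / (poch p p k * poch (a * p / b) p k * poch (a * p / c) p k
        * poch (a * Q * p) p k))
  * ((1 - P) * (1 - a * P / b) * (1 - a * P / c) * (1 - a * Q * P))
  * (a * Q / (b * c)) ^+ k / (a * Q / (b * c)).

Let a_gen1 j : 1 - a * p ^+ j != 0.
Proof. by rewrite subr_eq0 eq_sym a_gen. Qed.

Let a_neq1 : 1 - a != 0.
Proof. by have := a_gen1 0; rewrite expr0 mulr1. Qed.

Let p_nroot1 j : 1 - p ^+ j.+1 != 0.
Proof. by rewrite subr_eq0 eq_sym p_nroot. Qed.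

Let sub_b j : b - a * p ^+ j.+1 != 0.
Proof. by rewrite subr_eq0 eq_sym b_gen. Qed.

Let sub_c j : c - a * p ^+ j.+1 != 0.
Proof. by rewrite subr_eq0 eq_sym c_gen. Qed.

Let div_gen y j : y != 0 -> a * p ^+ j.+1 != y -> 1 - a * p / y * p ^+ j != 0.
Proof.
move=> y_neq0 ne; apply: contraNneq ne => /subr0_eq e.
by apply/eqP; rewrite exprS mulrA -[y]mul1r e [RHS]mulrAC mulfVK.
Qed.

Let poch_b_neq0 k : poch (a * p / b) p k != 0.
Proof. by apply: poch_neq0 => i; apply: div_gen. Qed.

Let poch_c_neq0 k : poch (a * p / c) p k != 0.
Proof. by apply: poch_neq0 => i; apply: div_gen. Qed.

Lemma wp_sumS N : wp_sum N.+1 = wp_ratio N * wp_sum N.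
Proof.
rewrite /wp_sum /wp_ratio /= !pochS exprS.
by field; rewrite b_neq0 c_neq0 -exprS sub_b sub_c !poch_b_neq0 !poch_c_neq0.
Qed.

Lemma wp_cert0 N : wp_cert N 0 = 0.
Proof. by rewrite /wp_cert /= expr0 subrr !(mulr0, mul0r). Qed.

Lemma wp_cert_eq0 N L : (N.+1 < L)%N -> wp_cert N L = 0.
Proof.
move=> lt_NL; rewrite /wp_cert /= (@poch_eq0 _ (p ^- N.+1) p L N.+1) //.
  by rewrite !(mulr0, mul0r).
by rewrite mulVf // expf_neq0.
Qed.

Lemma wp_term_telescope N k :
  wp_term N.+1 k - wp_ratio N * wp_term N k = wp_cert N k.+1 - wp_cert N k.
Proof.
rewrite /wp_term /wp_cert /wp_ratio /=.
set Q := p ^+ N.+1; set P := p ^+ k.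
have Q_neq0 : Q != 0 by rewrite expf_neq0.
have QV_neq1 : 1 - Q^-1 != 0 by rewrite subr_eq0 eq_sym invr_eq1 p_nroot.
have -> : p ^+ (2 * k) = P ^+ 2 by rewrite mulnC exprM.
have -> : p^-1 ^+ N.+1 = Q^-1 by rewrite exprVn.
have -> : a * p ^+ N.+2 = a * Q * p by rewrite exprSr mulrA.
have -> : (a * Q * p / (b * c)) ^+ k = (a * Q / (b * c)) ^+ k * P.
  by rewrite -exprMn mulrAC.
have -> : poch (p^-1 ^+ N) p k = poch Q^-1 p k * (1 - Q^-1 * P) / (1 - Q^-1).
  have -> : p^-1 ^+ N = Q^-1 * p by rewrite /Q exprSr invfM mulfVK // exprVn.
  by rewrite /P poch_shift [_ * poch _ _ _]mulrC mulfK.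
have aQP_neq1 : 1 - a * Q * P != 0 by rewrite /Q /P -mulrA -exprD.
have -> : poch (a * Q) p k = (1 - a * Q) * poch (a * Q * p) p k / (1 - a * Q * P).
  by rewrite /P -poch_shift mulfK.
rewrite !pochS !exprSr -/P.
have poch_p_neq0 : poch p p k != 0.
  by apply: poch_neq0 => i; rewrite -exprS.
have poch_aQp_neq0 : poch (a * Q * p) p k != 0.
  by apply: poch_neq0 => i; rewrite /Q -!mulrA -exprS -exprD.
field; rewrite a_neq0 b_neq0 c_neq0 Q_neq0 aQP_neq1 poch_aQp_neq0.
rewrite poch_b_neq0 poch_c_neq0 poch_p_neq0 /Q /P -!mulrA -!exprS -!exprD.
by rewrite -oppr_eq0 opprB p_nroot1 a_neq1 !sub_b !sub_c !a_gen1 p_nroot1.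
Qed.

Theorem wp_summation N L : (N < L)%N -> \sum_(k < L) wp_term N k = wp_sum N.
Proof.
elim: N => [|N IHN] lt_NL.
  case: L lt_NL => // L _; rewrite big_ord_recl big1 ?addr0.
    by rewrite /wp_term /wp_sum muln0 !poch0 !expr0 mulr1 divff // !mulr1 divr1.
  move=> i _; rewrite /wp_term (@poch_eq0 _ (p^-1 ^+ 0) p _ 0) //.
    by rewrite !(mulr0, mul0r).
  by rewrite !expr0 mulr1.
have telescope k : wp_term N.+1 k = wp_ratio N * wp_term N k + (wp_cert N k.+1 - wp_cert N k).
  by rewrite -wp_term_telescope addrC subrK.
rewrite (eq_bigr _ (fun (k : 'I_L) _ => telescope k)) big_split -mulr_sumr IHN ?wp_sumS 1?ltnW //.
rewrite -(big_mkord xpredT (fun k => wp_cert N k.+1 - wp_cert N k)) telescope_sumr //.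
by rewrite /= wp_cert_eq0 // wp_cert0 subrr addr0.
Qed.

End WellPoised6phi5.

(* Elements of the image of F(X) in K with a denominator prime to P form the local ring
   at P.  Working in an arbitrary field K receiving F[X], rather than in
   {fraction {poly F}} itself, keeps [field] from computing with concrete fractions. *)
Section LocalRing.
Variables (F K : fieldType) (tf : {rmorphism {poly F} -> K}) (P : {poly F}).
Implicit Types (A B : {poly F}) (f g : K).

Definition regular_at f :=
  exists A B, [/\ tf B != 0, coprimep B P & f = tf A / tf B].

Definition unit_at f := [/\ f != 0, regular_at f & regular_at f^-1].

Definition dvd_at (e : nat) f := exists2 g, regular_at g & f = tf P ^+ e * g.

Lemma regular_at_poly A : regular_at (tf A).
Proof. by exists A, 1; rewrite rmorph1 oner_neq0 coprime1p divr1. Qed.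

Lemma regular_at1 : regular_at 1.
Proof. by rewrite -(rmorph1 tf); apply: regular_at_poly. Qed.

Lemma regular_atM f g : regular_at f -> regular_at g -> regular_at (f * g).
Proof.
move=> [A1 [B1 [B1_neq0 B1_cop ->]]] [A2 [B2 [B2_neq0 B2_cop ->]]].
exists (A1 * A2), (B1 * B2).
by rewrite !rmorphM mulf_neq0 // coprimepMl B1_cop B2_cop mulf_div.
Qed.

Lemma regular_atD f g : regular_at f -> regular_at g -> regular_at (f + g).
Proof.
move=> [A1 [B1 [B1_neq0 B1_cop ->]]] [A2 [B2 [B2_neq0 B2_cop ->]]].
exists (A1 * B2 + A2 * B1), (B1 * B2).
by rewrite rmorphD !rmorphM mulf_neq0 // coprimepMl B1_cop B2_cop addf_div.
Qed.

Lemma regular_atN f : regular_at f -> regular_at (- f).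
Proof. by rewrite -mulN1r -(rmorphN1 tf); apply/regular_atM/regular_at_poly. Qed.

Lemma regular_atB f g : regular_at f -> regular_at g -> regular_at (f - g).
Proof. by move=> f_reg g_reg; apply/regular_atD/regular_atN. Qed.

Lemma regular_at_prod (I : Type) (s : seq I) (C : pred I) (G : I -> K) :
  (forall i, C i -> regular_at (G i)) -> regular_at (\prod_(i <- s | C i) G i).
Proof. by move=> G_reg; apply: big_ind => //; [exact: regular_at1 | exact: regular_atM]. Qed.

Lemma regular_atX f k : regular_at f -> regular_at (f ^+ k).
Proof.
move=> f_reg; elim: k => [|k IHk]; first by rewrite expr0; apply: regular_at1.
by rewrite exprS; apply: regular_atM.
Qed.

Lemma regular_at_factor y p i :
  regular_at y -> regular_at p -> regular_at (1 - y * p ^+ i).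
Proof.
by move=> y_reg p_reg; apply: regular_atB regular_at1 (regular_atM y_reg (regular_atX i p_reg)).
Qed.

Lemma regular_at_poch y p k : regular_at y -> regular_at p -> regular_at (poch y p k).
Proof. by move=> y_reg p_reg; apply: regular_at_prod => i _; apply: regular_at_factor. Qed.

Lemma unit_at_poly A : tf A != 0 -> coprimep A P -> unit_at (tf A).
Proof.
move=> A_neq0 A_cop; split=> //; first exact: regular_at_poly.
by exists 1, A; rewrite rmorph1 div1r.
Qed.

Lemma unit_at1 : unit_at 1.
Proof. by split; rewrite ?oner_neq0 ?invr1 //; apply: regular_at1. Qed.

Lemma unit_at_regular f : unit_at f -> regular_at f. Proof. by case. Qed.

Lemma unit_atM f g : unit_at f -> unit_at g -> unit_at (f * g).
Proof.
move=> [f_neq0 f_reg fV_reg] [g_neq0 g_reg gV_reg].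
by split; rewrite ?mulf_neq0 ?invfM //; apply: regular_atM.
Qed.

Lemma unit_atV f : unit_at f -> unit_at f^-1.
Proof. by case=> f_neq0 f_reg fV_reg; split; rewrite ?invr_eq0 ?invrK. Qed.

Lemma unit_atN f : unit_at f -> unit_at (- f).
Proof.
case=> f_neq0 f_reg fV_reg.
by split; rewrite ?oppr_eq0 ?invrN //; apply: regular_atN.
Qed.

Lemma unit_at_prod (I : Type) (s : seq I) (C : pred I) (G : I -> K) :
  (forall i, C i -> unit_at (G i)) -> unit_at (\prod_(i <- s | C i) G i).
Proof. by move=> G_unit; apply: big_ind => //; [exact: unit_at1 | exact: unit_atM]. Qed.

Lemma unit_at_poch y p k :
  (forall i, (i < k)%N -> unit_at (1 - y * p ^+ i)) -> unit_at (poch y p k).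
Proof. by move=> y_unit; apply: unit_at_prod => i _; apply: y_unit. Qed.

Lemma regular_at_div f g : regular_at f -> unit_at g -> regular_at (f / g).
Proof. by move=> f_reg [_ _ gV_reg]; apply: regular_atM. Qed.

Lemma dvd_at_poly e A : P ^+ e %| A -> dvd_at e (tf A).
Proof.
case/dvdpP=> B ->; exists (tf B); first exact: regular_at_poly.
by rewrite rmorphM rmorphXn mulrC.
Qed.

Lemma dvd_at0 e : dvd_at e 0.
Proof. by exists 0; rewrite ?mulr0 // -(rmorph0 tf); apply: regular_at_poly. Qed.

Lemma dvd_atD e f g : dvd_at e f -> dvd_at e g -> dvd_at e (f + g).
Proof.
case=> f' f'_reg -> [g' g'_reg ->].
by exists (f' + g'); [apply: regular_atD | rewrite mulrDr].
Qed.

Lemma dvd_atMl e f g : regular_at g -> dvd_at e f -> dvd_at e (g * f).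
Proof.
move=> g_reg [f' f'_reg ->].
by exists (g * f'); [apply: regular_atM | rewrite mulrCA].
Qed.

Lemma dvd_atMr e f g : regular_at g -> dvd_at e f -> dvd_at e (f * g).
Proof. by rewrite mulrC; apply: dvd_atMl. Qed.

Lemma dvd_atN e f : dvd_at e f -> dvd_at e (- f).
Proof. by rewrite -mulN1r; apply/dvd_atMl/regular_atN/regular_at1. Qed.

Lemma dvd_atB e f g : dvd_at e f -> dvd_at e g -> dvd_at e (f - g).
Proof. by move=> f_dvd g_dvd; apply/dvd_atD/dvd_atN. Qed.

Lemma dvd_atM e1 e2 f g : dvd_at e1 f -> dvd_at e2 g -> dvd_at (e1 + e2) (f * g).
Proof.
case=> f' f'_reg -> [g' g'_reg ->].
by exists (f' * g'); [apply: regular_atM | rewrite exprD mulrACA].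
Qed.

Lemma dvd_at_sum e (I : Type) (s : seq I) (C : pred I) (G : I -> K) :
  (forall i, C i -> dvd_at e (G i)) -> dvd_at e (\sum_(i <- s | C i) G i).
Proof. by move=> G_dvd; apply: big_ind => //; [exact: dvd_at0 | exact: dvd_atD]. Qed.

Lemma dvd_at_prodB e k (u v : nat -> K) :
  (forall i, (i < k)%N -> [/\ regular_at (u i), regular_at (v i) & dvd_at e (u i - v i)]) ->
  dvd_at e (\prod_(i < k) u i - \prod_(i < k) v i).
Proof.
elim: k => [|k IHk] uv; first by rewrite !big_ord0 subrr; apply: dvd_at0.
have [uk_reg vk_reg uvk_dvd] := uv k (ltnSn k).
rewrite !big_ord_recr /=.
set U := \prod_(i < k) u i; set V := \prod_(i < k) v i.
have -> : U * u k - V * v k = U * (u k - v k) + (U - V) * v k by ring.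
apply: dvd_atD; last by apply: dvd_atMr (IHk _) => // i /ltnW; apply: uv.
apply: dvd_atMl uvk_dvd; apply: regular_at_prod => i _.
by have [] := uv i (ltnW (ltn_ord i)).
Qed.

Lemma dvd_at_poch y p k i : (i < k)%N -> regular_at y -> regular_at p ->
  dvd_at 1 (1 - y * p ^+ i) -> dvd_at 1 (poch y p k).
Proof.
move=> lt_ik y_reg p_reg dvd_i; rewrite /poch (bigD1 (Ordinal lt_ik)) //=.
by apply: dvd_atMr dvd_i; apply: regular_at_prod => j _; apply: regular_at_factor.
Qed.

Lemma dvd_at_pairB y t : regular_at y -> unit_at t -> dvd_at 1 (1 - t) ->
  dvd_at 2 ((1 - y) * (1 - y) - (1 - y * t) * (1 - y / t)).
Proof.
move=> y_reg t_unit t_dvd; have [t_neq0 _ _] := t_unit.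
have -> : (1 - y) * (1 - y) - (1 - y * t) * (1 - y / t) = y / t * ((1 - t) * (1 - t)).
  by field.
by apply: dvd_atMl; [exact: regular_at_div | exact: (dvd_atM t_dvd t_dvd)].
Qed.

Lemma dvd_at_poch_pairB y p t k : regular_at y -> regular_at p -> unit_at t ->
  dvd_at 1 (1 - t) ->
  dvd_at 2 (poch y p k * poch y p k - poch (y * t) p k * poch (y / t) p k).
Proof.
move=> y_reg p_reg t_unit t_dvd; rewrite /poch -!big_split /=.
pose u i := (1 - y * p ^+ i) * (1 - y * p ^+ i).
pose v i := (1 - y * t * p ^+ i) * (1 - y / t * p ^+ i).
have yt_reg : regular_at (y * t) by apply: regular_atM (unit_at_regular t_unit).
have yVt_reg : regular_at (y / t) by apply: regular_at_div.
apply: (@dvd_at_prodB _ _ u v) => i _; split.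
- by apply: regular_atM; apply: regular_at_factor.
- by apply: regular_atM; apply: regular_at_factor.
rewrite /u /v mulrAC [y / t * _]mulrAC.
by apply: dvd_at_pairB => //; apply/regular_atM/regular_atX.
Qed.

Lemma dvd_at_divB e f1 f2 g1 g2 :
  regular_at f2 -> unit_at g1 -> unit_at g2 ->
  dvd_at e (f1 - f2) -> dvd_at e (g1 - g2) -> dvd_at e (f1 / g1 - f2 / g2).
Proof.
move=> f2_reg g1_unit g2_unit df dg.
have [g1_neq0 _ g1V_reg] := g1_unit; have [g2_neq0 _ g2V_reg] := g2_unit.
have -> : f1 / g1 - f2 / g2 = (f1 - f2) / g1 - f2 / (g1 * g2) * (g1 - g2).
  by field; rewrite g1_neq0 g2_neq0.
apply: dvd_atB; first exact: dvd_atMr.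
by apply: dvd_atMl dg; apply: regular_at_div => //; apply: unit_atM.
Qed.

End LocalRing.

Lemma PhiQ_dvdp_XnsubC n m : (0 < n)%N -> (n %| m)%N -> PhiQ n %| 'X^m - 1.
Proof.
move=> n_gt0 /dvdnP[t ->]; rewrite mulnC exprM subrX1; apply: dvdp_mulr.
have := prod_Cyclotomic n_gt0; move/(congr1 (map_poly (intr : int -> rat))).
rewrite rmorph_prod rmorphB rmorph1 /= map_polyXn => <-.
by rewrite (big_rem n) ?dvdp_mulIl // -dvdn_divisors.
Qed.

(* A common root of [PhiQ n] and ['X^m - 1] would be a primitive [n]-th root of unity
   of order dividing [m]. *)
Lemma coprimep_XnsubC_PhiQ n m : (0 < n)%N -> (0 < m)%N -> ~~ (n %| m)%N ->
  coprimep ('X^m - 1) (PhiQ n).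
Proof.
move=> n_gt0 m_gt0 n_ndvd_m; have [z z_prim] := C_prim_root_exists n_gt0.
rewrite -(coprimep_map (ratr : {rmorphism rat -> algC})).
rewrite rmorphB rmorph1 /= map_polyXn /PhiQ -map_poly_comp.
have -> : map_poly (ratr \o intr) 'Phi_n = map_poly (intr : int -> algC) 'Phi_n.
  by apply: eq_map_poly => c /=; rewrite rmorph_int.
rewrite (Cintr_Cyclotomic z_prim); apply/Pdiv.ClosedField.coprimepP => y.
rewrite rootE !hornerE => /eqP y_root; apply/negP => /eqP y_cyc.
have : root (cyclotomic z n) y by rewrite /root y_cyc.
rewrite (root_cyclotomic z_prim) => y_prim.
by move: n_ndvd_m; rewrite (prim_order_dvd y_prim) -subr_eq0 y_root eqxx.
Qed.

Lemma coprimep_X_PhiQ n : (0 < n)%N -> coprimep 'X (PhiQ n).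
Proof.
move=> n_gt0; apply: coprimep_dvdl (PhiQ_dvdp_XnsubC n_gt0 (dvdnn n)) _.
by rewrite coprimep_sym coprimepX rootE !hornerE expr0n eqn0Ngt n_gt0.
Qed.

Section IndeterminatePowers.
Variables (K : fieldType) (tf : {rmorphism {poly rat} -> K}).
Hypothesis tf_eq0 : forall A, (tf A == 0) = (A == 0).
Local Notation x := (tf 'X).

Lemma qpow_neq0 (m : int) : x ^ m != 0.
Proof. by rewrite expfz_eq0 negb_and tf_eq0 polyX_eq0 orbT. Qed.

Lemma qpowD (m k : int) : x ^ (m + k) = x ^ m * x ^ k.
Proof. by rewrite expfzDr // tf_eq0 polyX_eq0. Qed.

Lemma qpow_subr1 k : x ^+ k - 1 = tf ('X^k - 1).
Proof. by rewrite rmorphB rmorphXn rmorph1. Qed.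

Lemma qpow_eq1 (m : int) : (x ^ m == 1) = (m == 0).
Proof.
have pos k : x ^+ k.+1 != 1.
  by rewrite -subr_eq0 qpow_subr1 tf_eq0 -size_poly_eq0 -polyC1 size_XnsubC.
by case: m => [[|k]|k]; rewrite ?expr0z ?eqxx // -?exprnP ?invr_eq1 (negPf (pos k)).
Qed.

Lemma eq_qpow (m k : int) : (x ^ m == x ^ k) = (m == k).
Proof.
rewrite -(inj_eq (mulIf (qpow_neq0 (- k)))) -!qpowD addrN expr0z qpow_eq1.
by rewrite subr_eq0.
Qed.

Lemma oneB_qpowN (m : int) : 1 - x ^ (- m) = - x ^ (- m) * (1 - x ^ m).
Proof. by rewrite mulrBr mulr1 mulNr -qpowD addNr expr0z opprK addrC. Qed.

Variable n : nat.
Hypothesis n_gt0 : (0 < n)%N.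
Local Notation P := (PhiQ n).

Lemma unit_at_qpow (m : int) : unit_at tf P (x ^ m).
Proof.
have unit_x : unit_at tf P x.
  by apply: unit_at_poly; rewrite ?tf_eq0 ?polyX_eq0 ?coprimep_X_PhiQ.
have unit_xn k : unit_at tf P (x ^+ k).
  by elim: k => [|k IHk]; [rewrite expr0; apply: unit_at1 | rewrite exprS; apply: unit_atM].
by case: m => k; [apply: unit_xn | apply/unit_atV/unit_xn].
Qed.

Lemma regular_at_oneB_qpow (m : int) : regular_at tf P (1 - x ^ m).
Proof. exact: regular_atB (regular_at1 _ _) (unit_at_regular (unit_at_qpow m)). Qed.

Lemma unit_at_oneB_qpow (m : int) : ~~ (n%:Z %| m)%Z -> unit_at tf P (1 - x ^ m).
Proof.
have nat_case k : ~~ (n %| k)%N -> unit_at tf P (1 - x ^+ k).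
  move=> n_ndvd_k; have k_gt0 : (0 < k)%N by case: k n_ndvd_k; rewrite ?dvdn0.
  rewrite -opprB qpow_subr1; apply/unit_atN/unit_at_poly.
    by rewrite tf_eq0 -size_poly_eq0 -polyC1 size_XnsubC.
  exact: coprimep_XnsubC_PhiQ.
case: m => k n_ndvd_k; first exact: nat_case.
by rewrite NegzE oneB_qpowN; apply/unit_atM/nat_case => //; apply/unit_atN/unit_at_qpow.
Qed.

Lemma dvd_at_oneB_qpow (m : int) : (n%:Z %| m)%Z -> dvd_at tf P 1 (1 - x ^ m).
Proof.
have nat_case k : (n %| k)%N -> dvd_at tf P 1 (1 - x ^+ k).
  move=> n_dvd_k; rewrite -opprB qpow_subr1; apply/dvd_atN/dvd_at_poly.
  by rewrite expr1; apply: PhiQ_dvdp_XnsubC.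
case: m => k n_dvd_k; first exact: nat_case.
rewrite NegzE oneB_qpowN; apply: dvd_atMl (nat_case _ n_dvd_k).
exact/regular_atN/unit_at_regular/unit_at_qpow.
Qed.

End IndeterminatePowers.

Lemma not_dvdz_small (n : nat) (e : int) :
  e != 0 -> - n%:Z < e < n%:Z -> ~~ (n%:Z %| e)%Z.
Proof.
move=> e_neq0 e_bd; apply/negP => /dvdzP[t e_eq]; subst e.
have [t_neg|[t0|t_pos]] : t <= -1 \/ t = 0 \/ 1 <= t by lia.
- by nia.
- by rewrite t0 mul0r eqxx in e_neq0.
- by nia.
Qed.

Lemma not_dvdz_4mulD (n j : nat) (c e : int) : odd n -> (0 < j < n)%N ->
  e = 4 * j%:Z + c * n%:Z -> ~~ (n%:Z %| e)%Z.
Proof.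
move=> n_odd j_bd ->; apply/negP => /dvdzP[t e_eq].
have : 4 * j%:Z = (t - c) * n%:Z by rewrite mulrBl -e_eq; ring.
move: (t - c) => s js; have s_bd : 0 < s < 4 by nia.
move: js; have [->|[->|->]] : s = 1 \/ s = 2 \/ s = 3 by lia.
all: lia.
Qed.

Section Theorem5.
Variables (K : fieldType) (tf : {rmorphism {poly rat} -> K}).
Hypothesis tf_eq0 : forall A, (tf A == 0) = (A == 0).
Variables (r : int) (n N : nat).
Hypotheses (n_gt1 : (1 < n)%N) (n_odd : odd n) (r_odd : ~~ (2 %| r)%Z).
Hypotheses (r_le_n : r <= n%:Z) (r_ge : 4 - r <= n%:Z).
Hypothesis N_def : 4 * N%:Z = 3 * n%:Z - r.

Local Notation x := (tf 'X).
Local Notation P := (PhiQ n).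
Local Notation a := (x ^ r).
Local Notation p := (x ^+ 4).
Local Notation t := (x ^+ (3 * n)).

Let n_gt0 : (0 < n)%N. Proof. exact: ltnW. Qed.

Let qpowM (m k : int) : x ^ m * x ^ k = x ^ (m + k).
Proof. by rewrite qpowD. Qed.

(* [exprnP] must come first: [invfM] would otherwise match [(x ^+ 4)^-1] by unfolding
   the power into a product. *)
Ltac qnorm :=
  rewrite ?exprnP ?(exprz_exp, invr_expz, qpowM, mulr1, divr1, mulrA, invfM).

Ltac qeq := qnorm; first [done | congr (_ ^ _); lia].

Let q_neq0 (e : int) : x ^ e != 0. Proof. exact: qpow_neq0. Qed.
Let q_eq1 (e : int) : (x ^ e == 1) = (e == 0). Proof. exact: qpow_eq1. Qed.
Let eq_q (e e' : int) : (x ^ e == x ^ e') = (e == e'). Proof. exact: eq_qpow. Qed.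

Let oneB_qpow_neq0 (m : int) : m != 0 -> 1 - x ^ m != 0.
Proof. by move=> m_neq0; rewrite subr_eq0 eq_sym qpow_eq1. Qed.

Definition summand k :=
  (1 - x ^ (8 * k%:Z + r)) / (1 - x) * poch a p k ^+ 4 / poch p p k ^+ 4
  * x ^ ((4 - 2 * r) * k%:Z).

Definition wp_weight k :=
  (1 - a * p ^+ (2 * k)) / (1 - a) * (poch a p k * poch a p k)
  / (poch p p k * poch p p k) * (p / (a * a)) ^+ k.

Definition pair_ratio y k :=
  poch (a * y) p k * poch (a / y) p k / (poch (p * y) p k * poch (p / y) p k).

Let a_neq1 : 1 - a != 0.
Proof. by apply: oneB_qpow_neq0; lia. Qed.

Let x_neq1 : 1 - x != 0.
Proof. by rewrite -[x]expr1z; apply: oneB_qpow_neq0. Qed.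

Let poch_p_neq0 k : poch p p k != 0.
Proof. by apply: poch_neq0 => i; qnorm; apply: oneB_qpow_neq0; lia. Qed.

Let poch_pt_neq0 k : poch (p * t) p k != 0.
Proof. by apply: poch_neq0 => i; qnorm; apply: oneB_qpow_neq0; lia. Qed.

Let poch_pVt_neq0 k : poch (p / t) p k != 0.
Proof. by apply: poch_neq0 => i; qnorm; apply: oneB_qpow_neq0; lia. Qed.

Lemma summand_factor k :
  summand k = (1 - a) / (1 - x) * (wp_weight k * pair_ratio 1 k).
Proof.
rewrite /summand.
have -> : x ^ (8 * k%:Z + r) = a * p ^+ (2 * k) by qeq.
have -> : x ^ ((4 - 2 * r) * k%:Z) = (p / (a * a)) ^+ k by qeq.
rewrite /wp_weight /pair_ratio !mulr1 !divr1.
by field; rewrite a_neq1 x_neq1 poch_p_neq0.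
Qed.

Lemma wp_term_factor k : wp_term p a a (a * t) N k = wp_weight k * pair_ratio t k.
Proof.
rewrite /wp_term /wp_weight /pair_ratio.
have -> : p^-1 ^+ N = a / t by qeq.
have -> : a * p ^+ N.+1 / (a * (a * t)) = p / (a * a) by qeq.
have -> : a * p ^+ N.+1 = p * t by qeq.
have -> : a * p / a = p by qeq.
have -> : a * p / (a * t) = p / t by qeq.
by field; rewrite a_neq1 poch_p_neq0 poch_pt_neq0 poch_pVt_neq0.
Qed.

Let unit_at_poch_p k y (c : int) : (k < n)%N -> y = p * x ^ (c * n%:Z) ->
  unit_at tf P (poch y p k).
Proof.
move=> lt_kn ->; apply: unit_at_poch => i lt_ik; qnorm.
apply: (unit_at_oneB_qpow tf_eq0 n_gt0).
by apply: (not_dvdz_4mulD (j := i.+1) (c := c)) => //; lia.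
Qed.

Let regular_at_q (e : int) : regular_at tf P (x ^ e).
Proof. exact/unit_at_regular/unit_at_qpow. Qed.

Let p_reg : regular_at tf P p.
Proof. by rewrite exprnP. Qed.

Let t_unit : unit_at tf P t.
Proof. by rewrite exprnP; apply: unit_at_qpow. Qed.

Let t_dvd : dvd_at tf P 1 (1 - t).
Proof. by rewrite exprnP; apply: dvd_at_oneB_qpow => //; apply/dvdzP; exists 3; lia. Qed.

Lemma dvd_at_pair_ratioB k : (k < n)%N -> dvd_at tf P 2 (pair_ratio 1 k - pair_ratio t k).
Proof.
move=> lt_kn; rewrite /pair_ratio !mulr1 !divr1.
apply: dvd_at_divB.
- by qnorm; apply: regular_atM; apply: regular_at_poch.
- by apply: unit_atM; apply: (unit_at_poch_p (c := 0)) => //; qeq.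
- by apply: unit_atM; [apply: (unit_at_poch_p (c := 3)) | apply: (unit_at_poch_p (c := -3))];
    rewrite //; qeq.
- exact: dvd_at_poch_pairB.
- exact: dvd_at_poch_pairB.
Qed.

Lemma dvd_at_wp_sum : dvd_at tf P 2 (wp_sum p a a (a * t) N).
Proof.
rewrite /wp_sum; apply: dvd_atMr.
  apply/unit_at_regular/unit_atV/unit_atM.
    by apply: (unit_at_poch_p (c := 0)); [lia | qeq].
  by apply: (unit_at_poch_p (c := -3)); [lia | qeq].
apply: (@dvd_atM _ _ _ _ 1 1).
  apply: (dvd_at_poch (i := N.-1)); [lia | qnorm; exact: regular_at_q | exact: p_reg |].
  by qnorm; apply: dvd_at_oneB_qpow => //; apply/dvdzP; exists 3; lia.
apply: (dvd_at_poch (i := (n - N).-1)); [lia | qnorm; exact: regular_at_q | exact: p_reg |].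
by qnorm; apply: dvd_at_oneB_qpow => //; apply/dvdzP; exists (-2); lia.
Qed.

Lemma wp_sum_eq : \sum_(k < n) wp_term p a a (a * t) N k = wp_sum p a a (a * t) N.
Proof. by apply: wp_summation; try move=> j; qnorm; rewrite ?q_neq0 ?q_eq1 ?eq_q //; lia. Qed.

Lemma regular_at_wp_weight k : (k < n)%N -> regular_at tf P (wp_weight k).
Proof.
move=> lt_kn; have pp_unit : unit_at tf P (poch p p k).
  by apply: (unit_at_poch_p (c := 0)) => //; qeq.
have a_unit : unit_at tf P (1 - a).
  by apply: unit_at_oneB_qpow => //; apply: not_dvdz_small; lia.
rewrite /wp_weight; apply: regular_atM; last by qnorm; apply: regular_at_q.
apply: regular_at_div; last exact: unit_atM.
apply: regular_atM; last by apply: regular_atM; apply: regular_at_poch.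
by apply: regular_at_div => //; qnorm; apply: regular_at_oneB_qpow.
Qed.

Lemma dvd_at_summand_sum : dvd_at tf P 2 (\sum_(k < n) summand k).
Proof.
rewrite (eq_bigr _ (fun (k : 'I_n) _ => summand_factor k)) -mulr_sumr.
apply: dvd_atMl.
  apply: regular_at_div; first exact: regular_at_oneB_qpow.
  by rewrite -[x]expr1z; apply: unit_at_oneB_qpow => //; apply: not_dvdz_small; lia.
have -> : \sum_(k < n) wp_weight k * pair_ratio 1 k =
    \sum_(k < n) wp_weight k * (pair_ratio 1 k - pair_ratio t k)
    + \sum_(k < n) wp_term p a a (a * t) N k.
  by rewrite -big_split; apply: eq_bigr => k _ /=; rewrite wp_term_factor -mulrDr subrK.
rewrite wp_sum_eq; apply: dvd_atD dvd_at_wp_sum; apply: dvd_at_sum => k _.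
exact: dvd_atMl (regular_at_wp_weight (ltn_ord k)) (dvd_at_pair_ratioB (ltn_ord k)).
Qed.

End Theorem5.

Lemma congr_ratfun_dvd_at (P : {poly rat}) e (f : Qq) :
  dvd_at (@tofrac _) P e f -> congr_ratfun f 0 (P ^+ e).
Proof.
case=> g [A [B [B_neq0 B_cop ->]]] ->; exists A, B; split.
- by apply: contraNneq B_neq0 => ->; rewrite rmorph0.
- exact: coprimep_expr.
- by rewrite subr0 rmorphM rmorphXn mulrA.
Qed.

Theorem theorem5 (r : int) (n : nat) :
  ~~ (2 %| r)%Z ->
  (1 < n)%N -> odd n ->
  (n%:Z = - r %[mod 4])%Z ->
  r <= n%:Z -> 4 - r <= n%:Z ->
  congr_ratfun
    (\sum_(k < n)
       qint (8 * k%:Z + r)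
       * (qpoch (qq ^ r) (qq ^+ 4) k) ^+ 4 / (qpoch (qq ^+ 4) (qq ^+ 4) k) ^+ 4
       * qq ^ ((4 - 2 * r) * k%:Z))
    0 (PhiQ n ^+ 2).
Proof.
move=> r_odd n_gt1 n_odd n_mod r_le r_ge.
have [N N_def] : exists N : nat, 4 * N%:Z = 3 * n%:Z - r.
  by exists (absz ((3 * n%:Z - r) %/ 4)%Z); lia.
apply: congr_ratfun_dvd_at.
exact: (dvd_at_summand_sum (@tofrac_eq0 _) n_gt1 n_odd r_odd r_le r_ge N_def).
Qed.
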